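(* Let $G=(V,E)$ be a finite connected multigraph, $\mathscr H_0$ a connected component of its exchange graph, and $G_0$ the spanning subgraph of $G$ associated to $\mathscr H_0$. If $X$ and $X'$ are two different saturated components of $G_0$, then $X\cap X'=\emptyset$.
   Context: A spanning tree of $G$ is a subgraph with vertex set $V$ that is a tree; a spanning 2-forest is a subgraph with vertex set $V$, without cycles, with exactly two connected components; $\mathcal{ST}(G)$, $\mathcal{SF}_2(G)$ denote the sets of these. For a spanning subgraph $G'$, $G'+e$ (resp. $G'-e$) is the spanning subgraph with edge set $E(G')\cup\{e\}$ (resp. $E(G')\setminus\{e\}$). The exchange graph $\mathscr H$ of $G$ has vertex set $\mathscr V_1\sqcup\mathscr V_2$, $\mathscr V_1=\{(F,T): F\in\mathcal{SF}_2(G),T\in\mathcal{ST}(G),E(F)\cap E(T)=\emptyset\}$, $\mathscr V_2=\{(T,F):T\in\mathcal{ST}(G),F\in\mathcal{SF}_2(G),E(F)\cap E(T)=\emptyset\}$, with $(F,T)\in\mathscr V_1$ adjacent to $(T',F')\in\mathscr V_2$ iff there is $e\in E(T)$ with $F'=T-e$ and $T'=F+e$. For a connected component $\mathscr H_0$, the edge set $E(A)\cup E(B)$ is independent of the vertex $(A,B)$ of $\mathscr H_0$, and $G_0$ is the spanning subgraph with this edge set. For $X\subseteq V$, $G_0[X]$ is the induced subgraph on $X$. $X$ is saturated with respect to $G_0$ if $G_0[X]$ has exactly $2|X|-2$ edges; a saturated component of $G_0$ is a subset of $V$ that is saturated with respect to $G_0$ and maximal for inclusion among such subsets. *)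

From mathcomp Require Import all_boot.
Set Implicit Arguments. Unset Strict Implicit. Unset Printing Implicit Defensive.

(* A finite multigraph: vertex type V, edge-label type E, and an endpoint map
   ends : E -> V * V (parallel edges = distinct labels with the same ends).
   A spanning subgraph is identified with its edge set S : {set E}. *)
Section Graphs.
Variables (V E : finType) (ends : E -> V * V).

Definition adj (S : {set E}) : rel V :=
  fun x y => [exists e in S, (ends e == (x, y)) || (ends e == (y, x))].

Definition comps (S : {set E}) : {set {set V}} :=
  [set [set y | connect (adj S) x y] | x : V].

Definition ncomp (S : {set E}) : nat := #|comps S|.

(* no cycles: no edge of S (loops included) has its ends joined in S - e *)
Definition acyclic (S : {set E}) : bool :=
  [forall e in S, ~~ connect (adj (S :\ e)) (ends e).1 (ends e).2].

Definition spanning_tree (S : {set E}) : bool := acyclic S && (ncomp S == 1).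
Definition spanning_2forest (S : {set E}) : bool := acyclic S && (ncomp S == 2).

Definition connected_graph : bool := ncomp setT == 1.

(* Exchange graph.  A vertex is (b, A, B): b = false encodes (F,T) in V1
   (A = F a 2-forest, B = T a tree); b = true encodes (T,F) in V2. *)
Definition hvert : finType := (bool * {set E} * {set E})%type.

Definition hvalid (v : hvert) : bool :=
  let: (b, A, B) := v in
  [&& (if b then spanning_tree A && spanning_2forest B
       else spanning_2forest A && spanning_tree B) & A :&: B == set0].

Definition hadj12 (F T T' F' : {set E}) : bool :=
  [exists e in T, (F' == T :\ e) && (T' == e |: F)].

Definition hadj : rel hvert := fun u w =>
  [&& hvalid u, hvalid w &
   match u, w with
   | (false, F, T), (true, T', F') => hadj12 F T T' F'
   | (true, T', F'), (false, F, T) => hadj12 F T T' F'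
   | _, _ => false
   end].

Definition is_hcomp (H0 : {set hvert}) : Prop :=
  exists2 v, hvalid v & H0 = [set w | connect hadj v w].

(* edge set E(A) ∪ E(B) of the spanning subgraph associated to a vertex (A,B) *)
Definition G0_of (v : hvert) : {set E} := v.1.2 :|: v.2.

Definition induced_edges (G0 : {set E}) (X : {set V}) : {set E} :=
  [set e in G0 | ((ends e).1 \in X) && ((ends e).2 \in X)].

(* |E(G0[X])| = 2|X| - 2, written without truncated subtraction *)
Definition saturated (G0 : {set E}) (X : {set V}) : bool :=
  #|induced_edges G0 X| + 2 == 2 * #|X|.

Definition saturated_component (G0 : {set E}) (X : {set V}) : bool :=
  saturated G0 X &&
  [forall Y : {set V}, (saturated G0 Y && (X \subset Y)) ==> (Y == X)].

End Graphs.

(* The spanning subgraph G0 attached to a vertex (A, B) of the exchange graph is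
   the union of two forests A and B.  Hence for every nonempty vertex set Y,
   G0[Y] has at most (|Y| - 1) + (|Y| - 1) = 2|Y| - 2 edges, i.e. G0 is
   (2,2)-sparse.  The edge count of induced subgraphs is supermodular, so if X
   and X' are saturated and meet, then
   |E(X u X')| >= |E(X)| + |E(X')| - |E(X n X')| >= 2|X u X'| - 2 and X u X' is
   saturated too; maximality then forces X = X u X' = X'. *)
From mathcomp Require Import all_boot.
From mathcomp Require Import zify.
Set Implicit Arguments. Unset Strict Implicit.

Section Multigraph.
Variables (V E : finType) (ends : E -> V * V).

Let comp (S : {set E}) x := [set y | connect (adj ends S) x y].

Lemma adj_sym (S : {set E}) : symmetric (adj ends S).
Proof.
by move=> x y; apply/existsP/existsP => -[e He]; exists e; rewrite orbC.
Qed.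

Lemma connect_adjS (S S' : {set E}) : S' \subset S ->
  subrel (connect (adj ends S')) (connect (adj ends S)).
Proof.
move=> sS'S; apply: connect_sub => x y /existsP[e /andP[eS' xy]].
by apply/connect1/existsP; exists e; rewrite (subsetP sS'S _ eS').
Qed.

Lemma acyclicS (S S' : {set E}) :
  S' \subset S -> acyclic ends S -> acyclic ends S'.
Proof.
move=> sS'S /forallP acS; apply/forallP => e; apply/implyP => eS'.
have := acS e; rewrite (subsetP sS'S _ eS') /=; apply: contra.
exact/connect_adjS/setSD.
Qed.

Lemma ncomp_ltn_disconnect (S S' : {set E}) u w : S' \subset S ->
  connect (adj ends S) u w -> ~~ connect (adj ends S') u w ->
  ncomp ends S < ncomp ends S'.
Proof.
move=> sS'S cSuw ncS'uw.
have symS := sym_connect_sym (adj_sym S).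
pose merge (C : {set V}) := [set y | [exists x in C, connect (adj ends S) x y]].
have merge_comp x : merge (comp S' x) = comp S x.
  apply/setP => y; rewrite !inE; apply/existsP/idP => [[z]|xy].
    by rewrite inE => /andP[/(connect_adjS sS'S) xz zy]; exact: connect_trans xz zy.
  by exists x; rewrite inE connect0.
have compsS : comps ends S = merge @: comps ends S'.
  by rewrite /comps -imset_comp; apply: eq_imset => x /=; rewrite merge_comp.
rewrite /ncomp compsS ltn_neqAle leq_imset_card andbT; apply/negP => /imset_injP inj.
have : comp S' u = comp S' w.
  apply: inj; rewrite ?(imset_f (comp S')) // !merge_comp.
  by apply/setP => y; rewrite !inE; exact: same_connect.
by move/setP/(_ w); rewrite !inE connect0 => cuw; rewrite cuw in ncS'uw.
Qed.

Lemma acyclic_card_ncomp (S : {set E}) :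
  acyclic ends S -> #|S| + ncomp ends S <= #|V|.
Proof.
elim: {S}#|S| {-2}S (erefl #|S|) => [|n IH] S cardS acS.
  by rewrite cardS add0n (leq_trans (leq_imset_card _ _)).
have [e eS] : exists e, e \in S by apply/set0Pn; rewrite -card_gt0 cardS.
have cardSe : #|S :\ e| = n by move: cardS; rewrite (cardsD1 e S) eS add1n => -[].
have := IH _ cardSe (acyclicS (subD1set S e) acS).
have : ncomp ends S < ncomp ends (S :\ e).
  apply: (@ncomp_ltn_disconnect _ _ (ends e).1 (ends e).2 (subD1set S e)).
    by apply/connect1/existsP; exists e; rewrite eS -surjective_pairing eqxx.
  by move/forallP: acS => /(_ e); rewrite eS.
rewrite cardS; lia.
Qed.

Lemma comp_isolated (S : {set E}) x :
  (forall e, e \in S -> ((ends e).1 != x) && ((ends e).2 != x)) ->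
  comp S x = [set x].
Proof.
move=> isoSx; apply/setP => y; rewrite !inE.
apply/idP/eqP => [|->]; last exact: connect0.
case/connectP => -[|z p] /= => [_ -> //|/andP[/existsP[e /andP[eS exz]] _]].
have /andP[] := isoSx e eS.
by case/orP: exz => /eqP -> /=; rewrite eqxx ?andbF.
Qed.

(* One component through a point of X, plus one isolated point per vertex
   outside X. *)
Lemma card_setC_ltn_ncomp (S : {set E}) (X : {set V}) x0 :
  (forall e, e \in S -> ((ends e).1 \in X) && ((ends e).2 \in X)) ->
  x0 \in X -> #|~: X| < ncomp ends S.
Proof.
move=> inX x0X.
pose singles := [set [set x] | x in ~: X].
have card_singles : #|singles| = #|~: X| by apply/card_imset/set1_inj.
have sub_comps : comp S x0 |: singles \subset comps ends S.
  apply/subsetP => C; rewrite !inE => /orP[/eqP -> | /imsetP[x]].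
    exact: imset_f.
  rewrite inE => xX ->; rewrite -(@comp_isolated S x) ?imset_f // => e /inX.
  by case/andP=> e1X e2X; apply/andP; split; apply: contraNneq xX => <-.
have x0_notin : comp S x0 \notin singles.
  apply/imsetP => -[x]; rewrite inE => xX /setP /(_ x0).
  by rewrite !inE connect0 => /esym/eqP x0x; rewrite -x0x x0X in xX.
by have := subset_leq_card sub_comps; rewrite cardsU1 x0_notin card_singles.
Qed.

Lemma acyclic_card_induced (S : {set E}) (X : {set V}) x0 :
  acyclic ends S -> x0 \in X -> #|induced_edges ends S X| < #|X|.
Proof.
move=> acS x0X.
have inX e : e \in induced_edges ends S X -> ((ends e).1 \in X) && ((ends e).2 \in X).
  by rewrite inE => /andP[].
have acI : acyclic ends (induced_edges ends S X).
  by apply: acyclicS acS; apply/subsetP => e; rewrite inE => /andP[].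
have := acyclic_card_ncomp acI; have := card_setC_ltn_ncomp inX x0X.
have := cardsC X; lia.
Qed.

Definition sparse22 (G : {set E}) : Prop :=
  forall (Y : {set V}) y, y \in Y -> #|induced_edges ends G Y| + 2 <= 2 * #|Y|.

Lemma induced_edgesUl (A B : {set E}) (Y : {set V}) :
  induced_edges ends (A :|: B) Y = induced_edges ends A Y :|: induced_edges ends B Y.
Proof. by apply/setP => e; rewrite !inE andb_orl. Qed.

Lemma acyclicU_sparse22 (A B : {set E}) :
  acyclic ends A -> acyclic ends B -> sparse22 (A :|: B).
Proof.
move=> acA acB Y y yY; rewrite induced_edgesUl.
have := (leq_card_setU (induced_edges ends A Y) (induced_edges ends B Y)).1.
have := acyclic_card_induced acA yY; have := acyclic_card_induced acB yY; lia.
Qed.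

Lemma induced_edgesUr_sub (G : {set E}) (X X' : {set V}) :
  induced_edges ends G X :|: induced_edges ends G X' \subset
  induced_edges ends G (X :|: X').
Proof.
apply/subsetP => e; rewrite !inE.
by case/orP => /and3P[-> h1 h2]; rewrite h1 h2 ?orbT.
Qed.

Lemma induced_edgesIr (G : {set E}) (X X' : {set V}) :
  induced_edges ends G X :&: induced_edges ends G X' =
  induced_edges ends G (X :&: X').
Proof.
apply/setP => e; rewrite !inE.
by case: (e \in G) ((ends e).1 \in X) ((ends e).1 \in X')
          ((ends e).2 \in X) ((ends e).2 \in X') => [] [] [] [] [].
Qed.

Lemma saturatedU (G : {set E}) (X X' : {set V}) y :
  sparse22 G -> y \in X :&: X' ->
  saturated ends G X -> saturated ends G X' -> saturated ends G (X :|: X').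
Proof.
move=> spG yXX' /eqP satX /eqP satX'.
have /setIP[yX _] := yXX'.
rewrite /saturated eqn_leq (spG _ y) ?inE ?yX //=.
have := subset_leq_card (induced_edgesUr_sub G X X').
have := cardsUI (induced_edges ends G X) (induced_edges ends G X').
rewrite induced_edgesIr.
have := spG _ _ yXX'; have := cardsUI X X'; lia.
Qed.

Lemma saturated_component_disjoint (G : {set E}) (X X' : {set V}) :
  sparse22 G -> saturated_component ends G X -> saturated_component ends G X' ->
  X != X' -> X :&: X' = set0.
Proof.
move=> spG /andP[satX /forallP maxX] /andP[satX' /forallP maxX'] neqXX'.
apply/eqP; apply: contraNT neqXX' => /set0Pn[y yXX'].
have satU := saturatedU spG yXX' satX satX'.
have := maxX (X :|: X'); rewrite satU subsetUl => /eqP <-.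
by have := maxX' (X :|: X'); rewrite satU subsetUr => /eqP ->.
Qed.

Lemma hvalid_acyclic (v : hvert E) :
  hvalid ends v -> acyclic ends v.1.2 && acyclic ends v.2.
Proof.
by case: v => [[[] A] B] /andP[/andP[/andP[-> _] /andP[-> _]] _].
Qed.

Lemma hcomp_hvalid (H0 : {set hvert E}) v :
  is_hcomp ends H0 -> v \in H0 -> hvalid ends v.
Proof.
move=> [v0 validv0 ->]; rewrite inE => /connectP[p + ->].
elim: p v0 validv0 => //= w p IH v0 _ /andP[v0w].
by apply: IH; case/and3P: v0w.
Qed.

End Multigraph.

Theorem lemma2p7 (V E : finType) (ends : E -> V * V)
    (H0 : {set hvert E}) (v : hvert E) (X X' : {set V}) :
  connected_graph ends ->
  is_hcomp ends H0 -> v \in H0 ->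
  saturated_component ends (G0_of v) X ->
  saturated_component ends (G0_of v) X' ->
  X != X' ->
  X :&: X' = set0.
Proof.
move=> _ hcompH0 vH0; apply: saturated_component_disjoint.
have /andP[acA acB] := hvalid_acyclic (hcomp_hvalid hcompH0 vH0).
exact: acyclicU_sparse22.
Qed.
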